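(* Let $m\ge1$, $N=2^m$. Then over $\mathbb{F}_2$: (i) $\boldsymbol{G}_N=\boldsymbol{G}_N^{-1}$; (ii) $\mathbf{Q}_{\pi}\boldsymbol{G}_N=(\boldsymbol{G}_N\mathbf{Q}_{\pi})^{-1}$; (iii) $(\boldsymbol{G}_N\mathbf{Q}_{\pi})^2=\mathbf{Q}_{\pi}\boldsymbol{G}_N$; (iv) $\boldsymbol{G}_N\mathbf{Q}_{\pi}\boldsymbol{G}_N=\mathbf{Q}_{\pi}\boldsymbol{G}_N\mathbf{Q}_{\pi}$.
   Context: $\boldsymbol{G}_N=\begin{pmatrix}1&0\\1&1\end{pmatrix}^{\otimes m}$ over $\mathbb{F}_2$ (Kronecker power), indices $0,\dots,N-1$. $\mathbf{Q}_{\pi}$ is the $N\times N$ permutation matrix of the permutation of $[0,N-1]$ swapping $i$ and $N-1-i$ for all $i$. *)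

From mathcomp Require Import all_boot all_order all_algebra all_fingroup.
Set Implicit Arguments. Unset Strict Implicit. Unset Printing Implicit Defensive.
Import GRing.Theory.
Local Open Scope ring_scope.

(* Row/column indices of a Kronecker product 'I_(m * p): i = (i %/ p) * p + i %% p. *)
Lemma kron_div_ord m p (i : 'I_(m * p)) : (i %/ p < m)%N.
Proof.
have := ltn_ord i; move: (nat_of_ord i) => k; clear i.
case: p => [|p]; first by rewrite muln0.
by rewrite ltn_divLR.
Qed.
Lemma kron_mod_ord m p (i : 'I_(m * p)) : (i %% p < p)%N.
Proof.
have := ltn_ord i; move: (nat_of_ord i) => k; clear i.
case: p => [|p]; first by rewrite muln0.
by rewrite ltn_mod.
Qed.

Definition kron (R : pzRingType) (m n p q : nat)
  (A : 'M[R]_(m, n)) (B : 'M[R]_(p, q)) : 'M[R]_(m * p, n * q) :=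
  \matrix_(i, j) (A (Ordinal (kron_div_ord i)) (Ordinal (kron_div_ord j)) *
                  B (Ordinal (kron_mod_ord i)) (Ordinal (kron_mod_ord j))).

Definition F2ker : 'M['F_2]_2 := \matrix_(i < 2, j < 2) (if (j <= i)%N then 1 else 0).

Fixpoint polarG (m : nat) : 'M['F_2]_(2 ^ m) :=
  match m return 'M['F_2]_(2 ^ m) with
  | 0 => 1%:M
  | m'.+1 => castmx (esym (expnS 2 m'), esym (expnS 2 m')) (kron F2ker (polarG m'))
  end.

Definition revperm (N : nat) : 'S_N := perm (@rev_ord_inj N).

Definition Qpi (N : nat) : 'M['F_2]_N := perm_mx (revperm N).

From mathcomp Require Import all_boot all_order all_algebra all_fingroup.
From mathcomp Require Import zify ring.
Set Implicit Arguments. Unset Strict Implicit. Unset Printing Implicit Defensive.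
Import GRing.Theory.
Local Open Scope ring_scope.

(* Both G_(2N) = F (x) G_N and Q_(2N) = Q_2 (x) Q_N are Kronecker products, so by
   the mixed-product rule (A (x) B)(C (x) D) = AC (x) BD any identity between
   words in G and Q follows by induction on m from the same identity for the
   2x2 matrices F and Q_2, checked entrywise.  This gives G^2 = 1 and
   (GQ)^2 = QG; the remaining two identities follow from these since Q^2 = 1. *)

Section KronIndex.

Variables n q : nat.

Lemma kron_index_proof (a : 'I_n) (b : 'I_q) : (a * q + b < n * q)%N.
Proof.
have := ltn_ord a; have := ltn_ord b; move: (nat_of_ord a) (nat_of_ord b) => x y.
nia.
Qed.

Definition kron_index (a : 'I_n) (b : 'I_q) : 'I_(n * q) :=
  Ordinal (kron_index_proof a b).

Lemma kron_index_divK (a : 'I_n) (b : 'I_q) :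
  Ordinal (kron_div_ord (kron_index a b)) = a.
Proof.
apply: val_inj => /=; have q_gt0 : (0 < q)%N by apply: leq_ltn_trans (ltn_ord b).
by rewrite divnMDl // divn_small // addn0.
Qed.

Lemma kron_index_modK (a : 'I_n) (b : 'I_q) :
  Ordinal (kron_mod_ord (kron_index a b)) = b.
Proof. by apply: val_inj; rewrite /= modnMDl modn_small. Qed.

Lemma kron_index_divmod (k : 'I_(n * q)) :
  kron_index (Ordinal (kron_div_ord k)) (Ordinal (kron_mod_ord k)) = k.
Proof. by apply: val_inj; rewrite /= -divn_eq. Qed.

Variant kron_index_spec : 'I_(n * q) -> Type :=
  KronIndex a b : kron_index_spec (kron_index a b).

Lemma kron_indexP (k : 'I_(n * q)) : kron_index_spec k.
Proof. by rewrite -[k]kron_index_divmod. Qed.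

Lemma eq_kron_index (a c : 'I_n) (b d : 'I_q) :
  (kron_index a b == kron_index c d) = (a == c) && (b == d).
Proof.
apply/eqP/andP => [|[/eqP-> /eqP->] //].
move/(congr1 (fun k => (Ordinal (kron_div_ord k), Ordinal (kron_mod_ord k)))).
by rewrite !kron_index_divK !kron_index_modK => -[-> ->].
Qed.

Lemma rev_kron_index (a : 'I_n) (b : 'I_q) :
  rev_ord (kron_index a b) = kron_index (rev_ord a) (rev_ord b).
Proof.
apply: val_inj => /=; have := ltn_ord a; have := ltn_ord b.
move: (nat_of_ord a) (nat_of_ord b) => x y; nia.
Qed.

Lemma sum_kron_index (V : nmodType) (F : 'I_(n * q) -> V) :
  \sum_(k < n * q) F k = \sum_(a < n) \sum_(b < q) F (kron_index a b).
Proof.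
rewrite pair_bigA (reindex (fun ab => kron_index ab.1 ab.2)) //=.
exists (fun k => (Ordinal (kron_div_ord k), Ordinal (kron_mod_ord k))).
  by move=> [a b] _; rewrite kron_index_divK kron_index_modK.
by move=> k _; rewrite kron_index_divmod.
Qed.

End KronIndex.

Arguments kron_indexP {n q} k.
Arguments sum_kron_index {n q V} F.

Lemma kronE (R : pzRingType) m n p q (A : 'M[R]_(m, n)) (B : 'M[R]_(p, q)) a b c d :
  kron A B (kron_index a b) (kron_index c d) = A a c * B b d.
Proof. by rewrite /kron mxE !(kron_index_divK, kron_index_modK). Qed.

Lemma kron1 (R : pzRingType) n q : kron (1%:M : 'M[R]_n) (1%:M : 'M[R]_q) = 1%:M.
Proof.
apply/matrixP => i j; case/kron_indexP: i => a b; case/kron_indexP: j => c d.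
by rewrite kronE !mxE eq_kron_index -natrM mulnb.
Qed.

Lemma mulmx_kron (R : comPzRingType) m n r p q s (A : 'M[R]_(m, n))
    (B : 'M[R]_(p, q)) (C : 'M[R]_(n, r)) (D : 'M[R]_(q, s)) :
  kron A B *m kron C D = kron (A *m C) (B *m D).
Proof.
apply/matrixP => i j; case/kron_indexP: i => a b; case/kron_indexP: j => c d.
rewrite kronE !mxE sum_kron_index big_distrlr /=.
by apply: eq_bigr => a' _; apply: eq_bigr => b' _; rewrite !kronE; ring.
Qed.

Lemma mulmx_castmx (R : pzRingType) n n' (e : n = n') (A B : 'M[R]_n) :
  castmx (e, e) A *m castmx (e, e) B = castmx (e, e) (A *m B).
Proof. by case: n' / e; rewrite !castmx_id. Qed.

Lemma castmx1 (R : pzRingType) n n' (e : n = n') :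
  castmx (e, e) (1%:M : 'M[R]_n) = 1%:M.
Proof. by case: n' / e; rewrite castmx_id. Qed.

Lemma Qpi_castmx n n' (e : n = n') : castmx (e, e) (Qpi n) = Qpi n'.
Proof. by case: n' / e; rewrite castmx_id. Qed.

Lemma Qpi_kron n q : Qpi (n * q) = kron (Qpi n) (Qpi q).
Proof.
apply/matrixP => i j; case/kron_indexP: i => a b; case/kron_indexP: j => c d.
by rewrite kronE /Qpi !perm_mxEsub !mxE !permE rev_kron_index eq_kron_index -natrM mulnb.
Qed.

Lemma Qpi_invol n : Qpi n *m Qpi n = 1%:M.
Proof.
rewrite /Qpi -perm_mxM -perm_mx1; congr perm_mx.
by apply/permP => i; rewrite permM !permE rev_ordK.
Qed.

Lemma Qpi_expS m : Qpi (2 ^ m.+1) =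
  castmx (esym (expnS 2 m), esym (expnS 2 m)) (kron (Qpi 2) (Qpi (2 ^ m))).
Proof. by rewrite -Qpi_kron Qpi_castmx. Qed.

Lemma polarG_expS m : polarG m.+1 =
  castmx (esym (expnS 2 m), esym (expnS 2 m)) (kron F2ker (polarG m)).
Proof. by []. Qed.

Lemma Qpi_exp0 : Qpi (2 ^ 0) = 1%:M.
Proof. by apply/matrixP => i j; rewrite !mxE !ord1. Qed.

Lemma Qpi2E : Qpi 2 = \matrix_(i < 2, j < 2) (i + j == 1)%N%:R.
Proof.
apply/matrixP => i j; rewrite /Qpi perm_mxEsub !mxE permE.
by case: i => [[|[|//]] ?]; case: j => [[|[|//]] ?].
Qed.

Lemma F2ker_invol : F2ker *m F2ker = 1%:M.
Proof.
apply/matrixP => i j; rewrite !mxE !big_ord_recl big_ord0 !mxE.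
by case: i => [[|[|//]] ?]; case: j => [[|[|//]] ?] /=; apply/eqP.
Qed.

Lemma F2ker_Qpi_sqr : (F2ker *m Qpi 2) *m (F2ker *m Qpi 2) = Qpi 2 *m F2ker.
Proof.
rewrite Qpi2E; apply/matrixP => i j.
rewrite !mxE !big_ord_recl !big_ord0 !mxE !big_ord_recl !big_ord0 !mxE.
by case: i => [[|[|//]] ?]; case: j => [[|[|//]] ?] /=; apply/eqP.
Qed.

Lemma polarG_invol m : polarG m *m polarG m = 1%:M.
Proof.
elim: m => [|m IHm]; first by rewrite mul1mx.
by rewrite polarG_expS mulmx_castmx mulmx_kron F2ker_invol IHm kron1 castmx1.
Qed.

Lemma polarG_Qpi_sqr m :
  (polarG m *m Qpi (2 ^ m)) *m (polarG m *m Qpi (2 ^ m)) = Qpi (2 ^ m) *m polarG m.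
Proof.
elim: m => [|m IHm]; first by rewrite Qpi_exp0 !mul1mx.
by rewrite polarG_expS Qpi_expS !mulmx_castmx !mulmx_kron F2ker_Qpi_sqr IHm.
Qed.

Lemma mulmx1_invmx (R : comUnitRingType) n (A B : 'M[R]_n) :
  A *m B = 1%:M -> A \in unitmx /\ B = invmx A.
Proof.
move=> AB1; have [A_unit _] := mulmx1_unit AB1.
by split=> //; rewrite -[invmx A]mulmx1 -AB1 mulKmx.
Qed.

Theorem lemma2 (m : nat) (hm : (1 <= m)%N) :
  [/\ polarG m \in unitmx /\ polarG m = invmx (polarG m),
      polarG m *m Qpi (2 ^ m) \in unitmx /\
        Qpi (2 ^ m) *m polarG m = invmx (polarG m *m Qpi (2 ^ m)),
      (polarG m *m Qpi (2 ^ m)) *m (polarG m *m Qpi (2 ^ m))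
        = Qpi (2 ^ m) *m polarG m
    & polarG m *m Qpi (2 ^ m) *m polarG m
        = Qpi (2 ^ m) *m polarG m *m Qpi (2 ^ m)].
Proof.
set G := polarG m; set Q := Qpi (2 ^ m).
have GQ_QG : G *m Q *m (Q *m G) = 1%:M.
  by rewrite -mulmxA (mulmxA Q) Qpi_invol mul1mx polarG_invol.
have GQGQ : G *m Q *m (G *m Q) = Q *m G := polarG_Qpi_sqr m.
split; [exact: mulmx1_invmx (polarG_invol m) | exact: mulmx1_invmx | by [] |].
by rewrite -GQGQ -!mulmxA Qpi_invol mulmx1.
Qed.
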